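(* Let $p>2$ be prime, $\mathcal{C}$ a $\mathbb{Z}_p\mathbb{Z}_{p^2}$-additive code and $C=\Phi(\mathcal{C})$. Then $$K(C)=\{\Phi(\mathbf{u})\mid \mathbf{u}\in\mathcal{C}\ \text{and}\ pP'(\mathbf{u},\mathbf{v})\in\mathcal{C}\ \text{for all}\ \mathbf{v}\in\mathcal{C}\}.$$
   Context: A $\mathbb{Z}_p\mathbb{Z}_{p^2}$-additive code is a subgroup $\mathcal{C}$ of $\mathbb{Z}_p^\alpha\times\mathbb{Z}_{p^2}^\beta$. The Gray map $\phi:\mathbb{Z}_{p^2}\to\mathbb{Z}_p^p$ is $\phi(\theta)=\theta''(1,\ldots,1)+\theta'(0,1,\ldots,p-1)$ with $\theta=\theta''p+\theta'$, $\theta',\theta''\in\{0,\ldots,p-1\}$, and $\Phi(\mathbf{x},\mathbf{y})=(\mathbf{x},\phi(y_1),\ldots,\phi(y_\beta))$. For $C\subseteq\mathbb{Z}_p^n$, the kernel is $K(C)=\{\mathbf{x}\in\mathbb{Z}_p^n\mid C+\mathbf{x}=C\}$. For $\mathbf{u},\mathbf{v}\in\mathbb{Z}_p^\alpha\times\mathbb{Z}_{p^2}^\beta$ with $u_i=u_i''p+u_i'$, $v_i=v_i''p+v_i'$ ($u_i',v_i'\in\{0,\ldots,p-1\}$) for $i>\alpha$, $pP'(\mathbf{u},\mathbf{v})$ is the vector with zeros in the first $\alpha$ coordinates and, in coordinate $i>\alpha$, the value $p(p-1)\in\mathbb{Z}_{p^2}$ if $u_i'+v_i'\ge p$ and $0$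 otherwise. *)

From HB Require Import structures.
From mathcomp Require Import all_boot all_order all_algebra.
Set Implicit Arguments. Unset Strict Implicit. Unset Printing Implicit Defensive.
Import GRing.Theory.
Local Open Scope ring_scope.

Notation ambient p alpha beta :=
  ('rV['Z_p]_alpha * 'rV['Z_(p ^ 2)%N]_beta)%type.

Definition is_additive_code (p alpha beta : nat) (C : {set ambient p alpha beta}) :=
  (0 \in C) /\ (forall u v, u \in C -> v \in C -> u - v \in C).

(* Gray map phi : Z_{p^2} -> Z_p^p,
   phi(theta) = theta''(1,...,1) + theta'(0,1,...,p-1), theta = theta'' p + theta'. *)
Definition gray (p : nat) (theta : 'Z_(p ^ 2)%N) : 'rV['Z_p]_p :=
  \row_(j < p) (((val theta %/ p)%N + (val theta %% p)%N * (val j))%:R : 'Z_p).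

Definition Phi (p alpha beta : nat) (u : ambient p alpha beta)
  : 'rV['Z_p]_(alpha + beta * p) :=
  row_mx u.1 (mxvec (\matrix_(i < beta) gray (u.2 ord0 i))).

Definition kernel (p n : nat) (C : {set 'rV['Z_p]_n}) : {set 'rV['Z_p]_n} :=
  [set x | [set c + x | c in C] == C].

Definition pP' (p alpha beta : nat) (u v : ambient p alpha beta)
  : ambient p alpha beta :=
  (0, \row_(i < beta)
        (if (p <= (val (u.2 ord0 i) %% p) + (val (v.2 ord0 i) %% p))%N
         then ((p * (p - 1))%N%:R : 'Z_(p ^ 2)%N) else 0)).

Arguments Phi {p alpha beta} u.
Arguments pP' {p alpha beta} u v.
Arguments kernel {p n} C.

(* The Gray map turns addition into a twisted addition: adding the low
   digits of a and b in Z_{p^2} may carry into the high digit, which shifts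
   every coordinate of phi(a + b) by 1 with respect to phi(a) + phi(b); adding
   p(p-1) = -p cancels that carry, so Phi(u) + Phi(v) = Phi(u + v + pP'(u,v)).
   As Phi is injective and C is a group, Phi(u) + Phi(v) lies in Phi(C) iff
   pP'(u,v) does in C.  A kernel vector is Phi(0) + x, hence of the form Phi(u),
   and, Phi(C) being finite, Phi(u) is in the kernel as soon as the translate
   Phi(C) + Phi(u) is contained in Phi(C). *)

From HB Require Import structures.
From mathcomp Require Import all_boot all_order all_algebra.
Set Implicit Arguments. Unset Strict Implicit. Unset Printing Implicit Defensive.
Import GRing.Theory.
Local Open Scope ring_scope.

(* Provides the missing finZmodType instance on products such as [ambient]. *)
HB.saturate prod.

Section TwistedInjection.

Variables (A G : finZmodType) (f : A -> G) (c : A -> A -> A).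
Hypotheses (f_inj : injective f) (f0 : f 0 = 0).
Hypothesis fD : forall u v, f u + f v = f (u + v + c u v).

Variables (C : {set A}) (C_zmod : zmod_closed C).

Lemma mem_image_addr u v : u \in C -> v \in C ->
  (f u + f v \in f @: C) = (c u v \in C).
Proof.
case: C_zmod => C0 CB uC vC.
have CD : {in C &, forall a b, a + b \in C}.
  by move=> a b aC bC; rewrite -[b]opprK -[- b]sub0r; apply/CB/CB.
have uvC := CD _ _ uC vC.
rewrite fD mem_imset //; apply/idP/idP => [uvcC | cC]; last exact: CD.
by rewrite -[c u v](addKr (u + v)) addrC; apply: CB.
Qed.

Lemma kernel_image :
  [set x | [set y + x | y in f @: C] == f @: C] =
  [set f u | u in C & [forall v in C, c u v \in C]].
Proof.
have C0 := C_zmod.1.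
apply/setP => x; rewrite inE; apply/eqP/imsetP => [Cx | [u]].
  have : f 0 + x \in f @: C by rewrite -Cx; do 2 apply: imset_f.
  rewrite f0 add0r => /imsetP[u uC xE]; subst x; exists u => //.
  rewrite inE uC; apply/forall_inP => v vC.
  by rewrite -mem_image_addr // addrC -Cx; do 2 apply: imset_f.
rewrite inE => /andP[uC /forall_inP cC] ->; apply/eqP.
rewrite eqEcard (card_imset _ (addIr (f u))).
rewrite leqnn andbT; apply/subsetP => _ /imsetP[_ /imsetP[v vC ->] ->].
by rewrite addrC mem_image_addr //; apply: cC.
Qed.

End TwistedInjection.

Section GrayDigits.

Variables (p : nat) (p_gt1 : (1 < p)%N).

Let p_gt0 : (0 < p)%N := ltnW p_gt1.

Lemma sqr_gt1 : (1 < p ^ 2)%N.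
Proof. by rewrite (ltn_trans p_gt1) // -{1}[p]expn1 ltn_exp2l. Qed.

(* [t = digit1 t * p + digit0 t]: digit0 and digit1 are the paper's t' and t''. *)
Definition digit0 (t : 'Z_(p ^ 2)) : 'Z_p := (t : nat)%:R.
Definition digit1 (t : 'Z_(p ^ 2)) : 'Z_p := (t %/ p)%:R.

Definition carry (a b : 'Z_(p ^ 2)) : bool := (p <= a %% p + b %% p)%N.

Lemma digit0_natr n : digit0 n%:R = n%:R.
Proof.
rewrite /digit0 val_Zp_nat ?sqr_gt1 // -Zp_nat_mod // modn_dvdm ?Zp_nat_mod //.
by rewrite dvdn_exp.
Qed.

Lemma digit1_natr n : digit1 n%:R = (n %/ p)%:R.
Proof.
rewrite /digit1 val_Zp_nat ?sqr_gt1 // [in RHS](divn_eq n (p ^ 2)).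
by rewrite expnS expn1 mulnA divnMDl // natrD natrM pchar_Zp // mulr0 add0r.
Qed.

Lemma digit0D a b : digit0 (a + b) = digit0 a + digit0 b.
Proof. by rewrite -{1}[a]natr_Zp -{1}[b]natr_Zp -natrD digit0_natr natrD. Qed.

Lemma digit1D a b : digit1 (a + b) = digit1 a + digit1 b + (carry a b)%:R.
Proof.
by rewrite -{1}[a]natr_Zp -{1}[b]natr_Zp -natrD digit1_natr divnD // !natrD.
Qed.

Lemma digit0_pmul k : digit0 (p * k)%:R = 0.
Proof. by rewrite digit0_natr natrM pchar_Zp // mul0r. Qed.

Lemma digit1_addr_pmul t k : digit1 (t + (p * k)%:R) = digit1 t + k%:R.
Proof. by rewrite -{1}[t]natr_Zp -natrD digit1_natr mulnC divnDMl // natrD. Qed.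

Lemma val_digit0 t : digit0 t = (t %% p)%N :> nat.
Proof. exact: val_Zp_nat. Qed.

Lemma val_digit1 t : digit1 t = (t %/ p)%N :> nat.
Proof.
rewrite /digit1 val_Zp_nat // modn_small // ltn_divLR // mulnn.
by rewrite -[X in (_ < X)%N](Zp_cast sqr_gt1).
Qed.

Lemma digits_inj a b : digit0 a = digit0 b -> digit1 a = digit1 b -> a = b.
Proof.
move=> /(congr1 val)/= + /(congr1 val)/=; rewrite !val_digit0 !val_digit1 => e0 e1.
by apply: val_inj; rewrite /= (divn_eq a p) (divn_eq b p) e0 e1.
Qed.

Lemma gray_digits t : gray t = \row_(j < p) (digit1 t + digit0 t * (val j)%:R).
Proof. by apply/rowP => j; rewrite !mxE natrD natrM Zp_nat_mod. Qed.

Lemma gray_inj : injective (@gray p).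
Proof.
move=> a b /rowP eq_ab.
have e1 := eq_ab (Ordinal p_gt0); have e01 := eq_ab (Ordinal p_gt1).
rewrite !gray_digits !mxE /= !mulr1 !mulr0 !addr0 in e1 e01.
by apply: (digits_inj _ e1); apply: (addrI (digit1 a)); rewrite e01 e1.
Qed.

Definition carry_fix (a b : 'Z_(p ^ 2)) : 'Z_(p ^ 2) :=
  if carry a b then (p * (p - 1))%:R else 0.

Lemma gray_add a b : gray a + gray b = gray (a + b + carry_fix a b).
Proof.
rewrite !gray_digits; apply/rowP => j; rewrite !mxE /carry_fix.
case: (carry a b) (digit1D a b) => /= digit1_ab.
  rewrite digit1_addr_pmul digit0D digit0_pmul digit1_ab digit0D.
  rewrite -[_ + 1 + _]addrA nat1r subn1 prednK // pchar_Zp // !addr0.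
  by rewrite mulrDl addrACA.
by rewrite !addr0 digit1_ab digit0D addr0 mulrDl addrACA.
Qed.

End GrayDigits.

Section GrayMap.

Variables (p alpha beta : nat) (p_gt1 : (1 < p)%N).

Lemma Phi_add (u v : ambient p alpha beta) : Phi u + Phi v = Phi (u + v + pP' u v).
Proof.
rewrite /Phi add_row_mx -linearD /= addr0; congr (row_mx _ (mxvec _)).
apply/row_matrixP => i; rewrite linearD /= !rowK gray_add //.
by congr gray; rewrite !mxE.
Qed.

Lemma Phi_inj : injective (@Phi p alpha beta).
Proof.
move=> [u1 u2] [v1 v2] /eq_row_mx[/= -> /(can_inj mxvecK) eq_u2v2].
congr pair; apply/rowP => i.
by have := congr1 (row i) eq_u2v2; rewrite !rowK => /(gray_inj p_gt1).
Qed.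

Lemma Phi0 : Phi (0 : ambient p alpha beta) = 0.
Proof.
rewrite /Phi /= -row_mx0 -(linear0 (@mxvec _ beta p)); congr (row_mx _ (mxvec _)).
by apply/matrixP => i j; rewrite !mxE /= div0n mod0n.
Qed.

End GrayMap.

Theorem lemma9 (p alpha beta : nat) (hp : prime p) (hp2 : (2 < p)%N)
  (C : {set ambient p alpha beta}) (hC : is_additive_code C) :
  kernel (Phi @: C) =
  [set Phi u | u in C & [forall v in C, pP' u v \in C]].
Proof.
have p_gt1 := prime_gt1 hp.
by rewrite /kernel (kernel_image (Phi_inj p_gt1) (Phi0 _ _ _) (Phi_add p_gt1) hC).
Qed.
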